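(* Let $\mathcal{R}=(\mathcal{X},(\mathcal{M},\mathcal{I}))$ be a reflexive graph category with isomorphisms. The forgetful functor $\int_n\,\mathcal{M}^n\to\mathcal{M}\;\longrightarrow\;\mathsf{Ctx}(\mathcal{R})$, sending $(n,\mathcal{F})\mapsto n$ and $(\mathbf{F},\eta)\mapsto\mathbf{F}$, is a split fibration with split generic object $1$.
   Context: Fix a locally small category $\mathcal{C}$ with finite products; all categories, functors and natural transformations below are internal to $\mathcal{C}$ (objects of objects $C_0$, of morphisms $C_1$, object/morphism parts $F_0,F_1$ of functors, composition $\circ_C$). A reflexive graph category $\mathcal{X}$ consists of internal categories $\mathcal{X}(0),\mathcal{X}(1)$, two distinct internal functors $\mathcal{X}(\mathbf{f}_\top),\mathcal{X}(\mathbf{f}_\bot):\mathcal{X}(1)\to\mathcal{X}(0)$ (face maps) and an internal functor $\mathcal{X}(\mathbf{d}):\mathcal{X}(0)\to\mathcal{X}(1)$ (degeneracy) with $\mathcal{X}(\mathbf{f}_\star)\circ\mathcal{X}(\mathbf{d})=\mathsf{id}$; $\mathcal{X}^n$ is the componentwise product. A reflexive graph functor $\mathcal{F}:\mathcal{X}\to\mathcal{Y}$ is a pair of internal functors $\mathcal{F}(l):\mathcal{X}(l)\to\mathcal{Y}(l)$; face map-preserving: $\mathcal{Y}(\mathbf{f}_\star)\circ\mathcal{F}(1)=\mathcal{F}(0)\circ\mathcal{X}(\mathbf{f}_\star)$; degeneracy-preserving: equipped with an internal natural isomorphism $\varepsilon_\mathcal{F}:\mathcal{Y}(\mathbf{d})\circ\mathcal{F}(0)\to\mathcal{F}(1)\circ\mathcal{X}(\mathbf{d})$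 with $\mathcal{Y}(\mathbf{f}_\star)_1\circ\varepsilon_\mathcal{F}=\mathsf{id}_{\mathcal{Y}(0)}\circ\mathcal{F}(0)_0$. Reflexive graph natural transformations $\eta:\mathcal{F}\to\mathcal{G}$: pairs of internal natural transformations $\eta(l):\mathcal{F}(l)\to\mathcal{G}(l)$; face map-preserving: $\mathcal{Y}(\mathbf{f}_\star)_1\circ\eta(1)=\eta(0)\circ\mathcal{X}(\mathbf{f}_\star)_0$; degeneracy-preserving: $(\eta(1)\circ\mathcal{X}(\mathbf{d})_0)\circ_{\mathcal{Y}(1)}\varepsilon_\mathcal{F}=\varepsilon_\mathcal{G}\circ_{\mathcal{Y}(1)}(\mathcal{Y}(\mathbf{d})_1\circ\eta(0))$. Composition $(\mathcal{G}\circ\mathcal{F})(l)=\mathcal{G}(l)\circ\mathcal{F}(l)$ with $\varepsilon_{\mathcal{G}\circ\mathcal{F}}=(\mathcal{G}(1)_1\circ\varepsilon_\mathcal{F})\circ(\varepsilon_\mathcal{G}\circ\mathcal{F}(0)_0)$; whiskering $(\eta\circ\mathcal{F})(l)=\eta(l)\circ\mathcal{F}(l)_0$; vertical composition componentwise. Projections $\mathsf{pr}^n_i$ have identity $\varepsilon$; tuples $\langle\mathcal{F}_0,\ldots,\mathcal{F}_{m-1}\rangle$ are componentwise, including $\varepsilon$. A reflexive graph category with isomorphisms $\mathcal{R}=(\mathcal{X},(\mathcal{M},\mathcal{I}))$: reflexive graph categories $\mathcal{X},\mathcal{M}$ and a reflexive graph functor $\mathcal{I}:\mathcal{M}\to\mathcal{X}$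 with $\mathcal{I}(l)_0$ iso, $\mathcal{I}(l)_1$ monic, $\mathcal{I}(0)\circ\mathcal{M}(\mathbf{f}_\star)=\mathcal{X}(\mathbf{f}_\star)\circ\mathcal{I}(1)$, $\mathcal{I}(1)\circ\mathcal{M}(\mathbf{d})=\mathcal{X}(\mathbf{d})\circ\mathcal{I}(0)$ (so $\varepsilon_\mathcal{I}$ is an identity), and every morphism of $\mathcal{M}(l)$ an isomorphism. $\mathcal{M}^n\to\mathcal{M}$: objects are face map- and degeneracy-preserving reflexive graph functors $\mathcal{M}^n\to\mathcal{M}$; morphisms $\mathcal{F}\to\mathcal{G}$ are face map- and degeneracy-preserving reflexive graph natural transformations $\mathcal{I}\circ\mathcal{F}\to\mathcal{I}\circ\mathcal{G}$. For an $m$-tuple $\mathbf{F}=(\mathcal{F}_0,\ldots,\mathcal{F}_{m-1})$ of objects of $\mathcal{M}^n\to\mathcal{M}$, $\mathbf{F}^*(\mathcal{G})=\mathcal{G}\circ\langle\mathcal{F}_0,\ldots,\mathcal{F}_{m-1}\rangle$ and $\mathbf{F}^*(\eta)=\eta\circ\langle\mathcal{F}_0,\ldots,\mathcal{F}_{m-1}\rangle$. $\mathsf{Ctx}(\mathcal{R})$: objects natural numbers; morphisms $n\to m$ are $m$-tuples of objects of $\mathcal{M}^n\to\mathcal{M}$; identity $(\mathsf{pr}^n_0,\ldots,\mathsf{pr}^n_{n-1})$; the $i$-th component of $\mathbf{G}\circ\mathbf{F}$ is $\mathbf{F}^*(\mathcal{G}_i)$. $\int_n\,\mathcal{M}^n\to\mathcal{M}$: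 objects are pairs $(n,\mathcal{F})$ with $\mathcal{F}$ an object of $\mathcal{M}^n\to\mathcal{M}$; morphisms $(n,\mathcal{F})\to(m,\mathcal{G})$ are pairs $(\mathbf{F},\eta)$ with $\mathbf{F}:n\to m$ in $\mathsf{Ctx}(\mathcal{R})$ and $\eta:\mathcal{F}\to\mathbf{F}^*(\mathcal{G})$ in $\mathcal{M}^n\to\mathcal{M}$; identity $(\mathsf{id}_n,\mathsf{id}_\mathcal{F})$; $(\mathbf{G},\eta_2)\circ(\mathbf{F},\eta_1)=(\mathbf{G}\circ\mathbf{F},\mathbf{F}^*(\eta_2)\circ\eta_1)$. A fibration $U:\mathcal{E}\to\mathcal{B}$ is split if it comes with chosen cartesian liftings whose induced substitution functors satisfy $\mathsf{id}^*=\mathsf{id}$ and $(g\circ f)^*=f^*\circ g^*$. A split fibration has a split generic object $\Omega$ if there are bijections $\theta_X$ from morphisms $X\to\Omega$ in $\mathcal{B}$ to objects of the fiber $\mathcal{E}_X$ with $\theta_Y(f\circ g)=g^*(\theta_X(f))$ for all $f:X\to\Omega$, $g:Y\to X$. *)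

From mathcomp Require Import all_boot.

Set Implicit Arguments.
Unset Strict Implicit.
Unset Printing Implicit Defensive.

Record FPCat := {
  ob : Type;
  hom : ob -> ob -> Type;
  cid : forall a, hom a a;
  cmp : forall a b c, hom b c -> hom a b -> hom a c;
  cmpA : forall a b c d (h : hom c d) (g : hom b c) (f : hom a b),
      cmp h (cmp g f) = cmp (cmp h g) f;
  cmp1l : forall a b (f : hom a b), cmp (cid b) f = f;
  cmp1r : forall a b (f : hom a b), cmp f (cid a) = f;
  one : ob;
  bang : forall a, hom a one;
  bang_uniq : forall a (f g : hom a one), f = g;
  prd : ob -> ob -> ob;
  p1 : forall a b, hom (prd a b) a;
  p2 : forall a b, hom (prd a b) b;
  pair : forall c a b, hom c a -> hom c b -> hom c (prd a b);
  pair_p1 : forall c a b (f : hom c a) (g : hom c b), cmp (p1 a b) (pair f g) = f;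
  pair_p2 : forall c a b (f : hom c a) (g : hom c b), cmp (p2 a b) (pair f g) = g;
  pair_uniq : forall c a b (h : hom c (prd a b)),
      h = pair (cmp (p1 a b) h) (cmp (p2 a b) h)
}.

Arguments cid {_} a.
Arguments cmp {_ a b c} _ _.
Arguments bang {_} a.
Arguments p1 {_ a b}.
Arguments p2 {_ a b}.
Arguments pair {_ c a b} _ _.

Notation "g \oo f" := (cmp g f) (at level 40, left associativity).

Section Internal.
Variable C : FPCat.

Definition c_iso (a b : ob C) (f : hom a b) : Prop :=
  exists g : hom b a, g \oo f = cid a /\ f \oo g = cid b.

Definition c_monic (a b : ob C) (f : hom a b) : Prop :=
  forall x (u v : hom x a), f \oo u = f \oo v -> u = v.

Definition pmap (a b a' b' : ob C) (f : hom a a') (g : hom b b')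
  : hom (prd a b) (prd a' b') := pair (f \oo p1) (g \oo p2).

(* Composition is given on generalized elements (natural in the stage), *)
(* cm f g = "f o g", meaningful when s o f = t o g.                     *)
Record ICat := {
  c0 : ob C;
  c1 : ob C;
  isrc : hom c1 c0;
  itgt : hom c1 c0;
  iid : hom c0 c1;
  icm : forall x, hom x c1 -> hom x c1 -> hom x c1
}.
Arguments icm _ {x} _ _.

Definition composable (A : ICat) x (f g : hom x (c1 A)) : Prop :=
  isrc A \oo f = itgt A \oo g.

Definition is_icat (A : ICat) : Prop :=
  [/\ isrc A \oo iid A = cid (c0 A) /\ itgt A \oo iid A = cid (c0 A),
      (forall x (f g : hom x (c1 A)), composable f g ->
          isrc A \oo icm A f g = isrc A \oo g /\ itgt A \oo icm A f g = itgt A \oo f),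
      (forall x y (h : hom y x) (f g : hom x (c1 A)), composable f g ->
          icm A (f \oo h) (g \oo h) = icm A f g \oo h),
      (forall x (f : hom x (c1 A)),
          icm A (iid A \oo itgt A \oo f) f = f /\ icm A f (iid A \oo isrc A \oo f) = f)
    & (forall x (f g k : hom x (c1 A)), composable f g -> composable g k ->
          icm A (icm A f g) k = icm A f (icm A g k))].

Definition is_igroupoid (A : ICat) : Prop :=
  forall x (f : hom x (c1 A)), exists g : hom x (c1 A),
    [/\ composable f g, composable g f,
        icm A g f = iid A \oo isrc A \oo f & icm A f g = iid A \oo itgt A \oo f].

Record IFun (A B : ICat) := { f0 : hom (c0 A) (c0 B); f1 : hom (c1 A) (c1 B) }.

Definition is_ifun (A B : ICat) (F : IFun A B) : Prop :=
  [/\ isrc B \oo f1 F = f0 F \oo isrc A,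
      itgt B \oo f1 F = f0 F \oo itgt A,
      f1 F \oo iid A = iid B \oo f0 F
    & forall x (f g : hom x (c1 A)), composable f g ->
        f1 F \oo icm A f g = icm B (f1 F \oo f) (f1 F \oo g)].

Definition fid (A : ICat) : IFun A A := {| f0 := cid (c0 A); f1 := cid (c1 A) |}.
Definition fcomp (A B D : ICat) (G : IFun B D) (F : IFun A B) : IFun A D :=
  {| f0 := f0 G \oo f0 F; f1 := f1 G \oo f1 F |}.

Definition is_nt (A B : ICat) (F G : IFun A B) (eta : hom (c0 A) (c1 B)) : Prop :=
  [/\ isrc B \oo eta = f0 F, itgt B \oo eta = f0 G
    & icm B (eta \oo itgt A) (f1 F) = icm B (f1 G) (eta \oo isrc A)].

Definition ntid (A B : ICat) (F : IFun A B) : hom (c0 A) (c1 B) := iid B \oo f0 F.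
Definition ntv (A B : ICat) (a b : hom (c0 A) (c1 B)) : hom (c0 A) (c1 B) :=
  icm B a b.

Definition is_niso (A B : ICat) (F G : IFun A B) (eta : hom (c0 A) (c1 B)) : Prop :=
  is_nt F G eta /\
  exists eta' : hom (c0 A) (c1 B),
    [/\ is_nt G F eta', ntv eta' eta = ntid F & ntv eta eta' = ntid G].

(* Reflexive graph categories (face maps indexed by bool: true = top)   *)
Record RG := {
  R0 : ICat; R1 : ICat;
  face : bool -> IFun R1 R0;
  dg : IFun R0 R1
}.

Definition is_rg_struct (X : RG) : Prop :=
  [/\ is_icat (R0 X), is_icat (R1 X), (forall b, is_ifun (face X b)), is_ifun (dg X)
    & forall b, fcomp (face X b) (dg X) = fid (R0 X)].

Definition is_rg (X : RG) : Prop :=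
  is_rg_struct X /\ face X true <> face X false.

(* reflexive graph functors equipped with a degeneracy datum epsilon *)
Record RGFe (X Y : RG) := {
  e0 : IFun (R0 X) (R0 Y);
  e1 : IFun (R1 X) (R1 Y);
  ee : hom (c0 (R0 X)) (c1 (R1 Y))
}.

Definition is_rgfun (X Y : RG) (F : RGFe X Y) : Prop :=
  [/\ is_ifun (e0 F), is_ifun (e1 F),
      (forall b, fcomp (face Y b) (e1 F) = fcomp (e0 F) (face X b)),
      is_niso (fcomp (dg Y) (e0 F)) (fcomp (e1 F) (dg X)) (ee F)
    & forall b, f1 (face Y b) \oo ee F = iid (R0 Y) \oo f0 (e0 F)].

Definition comp_e (X Y Z : RG) (G : RGFe Y Z) (F : RGFe X Y) : RGFe X Z :=
  {| e0 := fcomp (e0 G) (e0 F); e1 := fcomp (e1 G) (e1 F);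
     ee := icm (R1 Z) (f1 (e1 G) \oo ee F) (ee G \oo f0 (e0 F)) |}.

(* the identity natural transformation used as epsilon of strict functors *)
Definition strict_e (X Y : RG) (E0 : IFun (R0 X) (R0 Y)) (E1 : IFun (R1 X) (R1 Y))
  : RGFe X Y :=
  {| e0 := E0; e1 := E1; ee := iid (R1 Y) \oo (f0 E1 \oo f0 (dg X)) |}.

Definition iprod (A B : ICat) : ICat :=
  {| c0 := prd (c0 A) (c0 B); c1 := prd (c1 A) (c1 B);
     isrc := pmap (isrc A) (isrc B); itgt := pmap (itgt A) (itgt B);
     iid := pmap (iid A) (iid B);
     icm := fun x f g => pair (icm A (p1 \oo f) (p1 \oo g)) (icm B (p2 \oo f) (p2 \oo g)) |}.

Definition ione : ICat :=
  {| c0 := one C; c1 := one C; isrc := cid _; itgt := cid _; iid := cid _;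
     icm := fun x _ _ => bang x |}.

Definition fpmap (A B A' B' : ICat) (F : IFun A A') (G : IFun B B')
  : IFun (iprod A B) (iprod A' B') :=
  @Build_IFun (iprod A B) (iprod A' B') (pmap (f0 F) (f0 G)) (pmap (f1 F) (f1 G)).

Definition rgprod (X Y : RG) : RG :=
  {| R0 := iprod (R0 X) (R0 Y); R1 := iprod (R1 X) (R1 Y);
     face := fun b => fpmap (face X b) (face Y b); dg := fpmap (dg X) (dg Y) |}.

Definition rgone : RG :=
  {| R0 := ione; R1 := ione; face := fun _ => fid ione; dg := fid ione |}.

Definition fproj1 (A B : ICat) : IFun (iprod A B) A := @Build_IFun (iprod A B) A p1 p1.
Definition fproj2 (A B : ICat) : IFun (iprod A B) B := @Build_IFun (iprod A B) B p2 p2.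
Definition fpair (A B D : ICat) (F : IFun A B) (G : IFun A D) : IFun A (iprod B D) :=
  @Build_IFun A (iprod B D) (pair (f0 F) (f0 G)) (pair (f1 F) (f1 G)).
Definition fbang (A : ICat) : IFun A ione := @Build_IFun A ione (bang _) (bang _).

Definition eproj1 (X Y : RG) : RGFe (rgprod X Y) X :=
  @strict_e (rgprod X Y) X (fproj1 (R0 X) (R0 Y)) (fproj1 (R1 X) (R1 Y)).
Definition eproj2 (X Y : RG) : RGFe (rgprod X Y) Y :=
  @strict_e (rgprod X Y) Y (fproj2 (R0 X) (R0 Y)) (fproj2 (R1 X) (R1 Y)).
Definition epair (X Y Z : RG) (F : RGFe X Y) (G : RGFe X Z) : RGFe X (rgprod Y Z) :=
  @Build_RGFe X (rgprod Y Z) (fpair (e0 F) (e0 G)) (fpair (e1 F) (e1 G)) (pair (ee F) (ee G)).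
Definition ebang (X : RG) : RGFe X rgone :=
  @Build_RGFe X rgone (fbang (R0 X)) (fbang (R1 X)) (bang _).

Lemma ord0_absurd (i : 'I_0) : False.
Proof. by case: i. Qed.

Record RGIso := {
  RX : RG;
  RM : RG;
  RI0 : IFun (R0 RM) (R0 RX);
  RI1 : IFun (R1 RM) (R1 RX)
}.

Definition is_rgiso (R : RGIso) : Prop :=
  [/\ is_rg (RX R) /\ is_rg (RM R), is_ifun (RI0 R) /\ is_ifun (RI1 R),
      (c_iso (f0 (RI0 R)) /\ c_iso (f0 (RI1 R))) /\
      c_monic (f1 (RI0 R)) /\ c_monic (f1 (RI1 R)),
      (forall b, fcomp (RI0 R) (face (RM R) b) = fcomp (face (RX R) b) (RI1 R))
        /\ fcomp (RI1 R) (dg (RM R)) = fcomp (dg (RX R)) (RI0 R)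
    & is_igroupoid (R0 (RM R)) /\ is_igroupoid (R1 (RM R))].

Section Ctx.
Variable R : RGIso.
Local Notation X := (RX R).
Local Notation M := (RM R).

Definition Ie : RGFe M X := @strict_e M X (RI0 R) (RI1 R).

Fixpoint Mpow (n : nat) : RG :=
  match n with 0 => rgone | n'.+1 => rgprod M (Mpow n') end.

(* objects (and raw candidates) of  M^n -> M *)
Definition RGO (n : nat) := RGFe (Mpow n) M.
Definition valid_obj (n : nat) (F : RGO n) : Prop := is_rgfun F.

Fixpoint prj (n : nat) : 'I_n -> RGO n :=
  match n return 'I_n -> RGO n with
  | 0 => fun i => False_rect _ (ord0_absurd i)
  | n'.+1 => fun i => match unlift ord0 i with
                      | None => eproj1 M (Mpow n')
                      | Some j => comp_e (prj j) (eproj2 M (Mpow n'))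
                      end
  end.

Fixpoint tup (Y : RG) (m : nat) : ('I_m -> RGFe Y M) -> RGFe Y (Mpow m) :=
  match m return ('I_m -> RGFe Y M) -> RGFe Y (Mpow m) with
  | 0 => fun _ => ebang Y
  | m'.+1 => fun F => epair (F ord0) (tup (fun j => F (lift ord0 j)))
  end.

Definition ctx_hom (n m : nat) := 'I_m -> RGO n.
Definition ctx_valid (n m : nat) (f : ctx_hom n m) : Prop := forall i, valid_obj (f i).
Definition pull (n m : nat) (f : ctx_hom n m) (G : RGO m) : RGO n := comp_e G (tup f).
Definition ctx_id (n : nat) : ctx_hom n n := @prj n.
Arguments ctx_id : clear implicits.
Definition ctx_comp (n m k : nat) (g : ctx_hom m k) (f : ctx_hom n m) : ctx_hom n k :=
  fun i => pull f (g i).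

(* morphisms of M^n -> M : reflexive graph nat. transformations I o F -> I o G *)
Record RGH (n : nat) := {
  h0 : hom (c0 (R0 (Mpow n))) (c1 (R0 X));
  h1 : hom (c0 (R1 (Mpow n))) (c1 (R1 X))
}.

Definition valid_hom (n : nat) (F G : RGO n) (eta : RGH n) : Prop :=
  let IF := comp_e Ie F in let IG := comp_e Ie G in
  [/\ is_nt (e0 IF) (e0 IG) (h0 eta), is_nt (e1 IF) (e1 IG) (h1 eta),
      (forall b, f1 (face X b) \oo h1 eta = h0 eta \oo f0 (face (Mpow n) b))
    & icm (R1 X) (h1 eta \oo f0 (dg (Mpow n))) (ee IF)
      = icm (R1 X) (ee IG) (f1 (dg X) \oo h0 eta)].

Definition hid (n : nat) (F : RGO n) : RGH n :=
  let IF := comp_e Ie F in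
  {| h0 := ntid (e0 IF); h1 := ntid (e1 IF) |}.
Definition hcomp (n : nat) (a b : RGH n) : RGH n :=
  {| h0 := ntv (h0 a) (h0 b); h1 := ntv (h1 a) (h1 b) |}.
Definition hpull (n m : nat) (f : ctx_hom n m) (eta : RGH m) : RGH n :=
  {| h0 := h0 eta \oo f0 (e0 (tup f)); h1 := h1 eta \oo f0 (e1 (tup f)) |}.

(* the Grothendieck construction  \int_n M^n -> M  (objects (n, F)) *)
Definition IHom (n m : nat) := (ctx_hom n m * RGH n)%type.
Definition valid_ihom (n m : nat) (F : RGO n) (G : RGO m) (phi : IHom n m) : Prop :=
  ctx_valid phi.1 /\ valid_hom F (pull phi.1 G) phi.2.
Definition iid_int (n : nat) (F : RGO n) : IHom n n := (ctx_id n, hid F).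
Definition icomp (n m k : nat) (psi : IHom m k) (phi : IHom n m) : IHom n k :=
  (ctx_comp psi.1 phi.1, hcomp (hpull phi.1 psi.2) phi.2).

(* the forgetful functor U sends (n,F) to n and (F, eta) to F (= first
   projection).  Cartesian morphisms for U: *)
Definition cartesian (n m : nat) (F : RGO n) (G : RGO m) (phi : IHom n m) : Prop :=
  forall k (K : RGO k) (psi : IHom k m) (h : ctx_hom k n),
    valid_obj K -> valid_ihom K G psi -> ctx_valid h -> ctx_comp phi.1 h = psi.1 ->
    exists! chi : IHom k n, [/\ valid_ihom K F chi, chi.1 = h & icomp phi chi = psi].

Definition vertical (n : nat) (F G : RGO n) (phi : IHom n n) : Prop :=
  valid_ihom F G phi /\ phi.1 = ctx_id n.

(* U is a split fibration, w.r.t. the cleavage (pb, lift):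
   lift f G : pb f G -> G is the chosen cartesian lifting of f : n -> m,
   and the induced substitution functors satisfy id^* = id and
   (g o f)^* = f^* o g^*.  On a vertical phi : G -> G' over m, f^*(phi) is
   the unique vertical psi with lift f G' o psi = phi o lift f G. *)
Definition split_fibration
  (pb : forall n m, ctx_hom n m -> RGO m -> RGO n)
  (lift : forall n m, ctx_hom n m -> RGO m -> IHom n m) : Prop :=
  [/\ (forall n m (f : ctx_hom n m) (G : RGO m), ctx_valid f -> valid_obj G ->
         [/\ valid_obj (pb n m f G), valid_ihom (pb n m f G) G (lift n m f G),
             (lift n m f G).1 = f & cartesian (pb n m f G) G (lift n m f G)]),
      (forall m (G : RGO m), valid_obj G -> pb m m (ctx_id m) G = G),
      (* id^* = id on morphisms *)
      (forall m (G G' : RGO m) (phi : IHom m m),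
         valid_obj G -> valid_obj G' -> vertical G G' phi ->
         icomp (lift m m (ctx_id m) G') phi = icomp phi (lift m m (ctx_id m) G)),
      (forall n m k (f : ctx_hom n m) (g : ctx_hom m k) (G : RGO k),
         ctx_valid f -> ctx_valid g -> valid_obj G ->
         pb n m f (pb m k g G) = pb n k (ctx_comp g f) G)
    & (* (g o f)^* = f^* o g^* on morphisms *)
      (forall n m k (f : ctx_hom n m) (g : ctx_hom m k) (G G' : RGO k)
              (phi : IHom k k) (alpha : IHom m m) (beta chi : IHom n n),
         ctx_valid f -> ctx_valid g -> valid_obj G -> valid_obj G' ->
         vertical G G' phi ->
         vertical (pb m k g G) (pb m k g G') alpha ->
         icomp (lift m k g G') alpha = icomp phi (lift m k g G) ->
         vertical (pb n m f (pb m k g G)) (pb n m f (pb m k g G')) beta ->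
         icomp (lift n m f (pb m k g G')) beta = icomp alpha (lift n m f (pb m k g G)) ->
         vertical (pb n k (ctx_comp g f) G) (pb n k (ctx_comp g f) G') chi ->
         icomp (lift n k (ctx_comp g f) G') chi = icomp phi (lift n k (ctx_comp g f) G) ->
         beta = chi)].

(* split generic object Omega = 1 : bijections theta_n between morphisms
   n -> 1 of Ctx(R) and objects of the fibre over n, natural w.r.t. the
   chosen substitution. *)
Definition split_generic_one (pb : forall n m, ctx_hom n m -> RGO m -> RGO n) : Prop :=
  exists theta : forall n, ctx_hom n 1 -> RGO n,
    [/\ (forall n (f : ctx_hom n 1), ctx_valid f -> valid_obj (theta n f)),
        (forall n (f f' : ctx_hom n 1), ctx_valid f -> ctx_valid f' ->
           theta n f = theta n f' -> f = f'),
        (forall n (G : RGO n), valid_obj G -> exists2 f, ctx_valid f & theta n f = G)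
      & (forall n m (f : ctx_hom m 1) (g : ctx_hom n m), ctx_valid f -> ctx_valid g ->
           theta n (ctx_comp f g) = pb n m g (theta m f))].

End Ctx.
End Internal.

From Pilot Require Import Defs.
From mathcomp Require Import all_boot.
From Stdlib Require Import FunctionalExtensionality.

(* The cleavage pulls G : M^m -> M back along F : n -> m to F^*(G) = G o <F> and lifts F to
   (F, id). Since whiskering preserves identities and H^*(F^*(G)) = (F o H)^*(G), composing
   (F, id) with (H, eta) gives (F o H, eta), so every morphism over F o H factors uniquely
   through (F, id). The equations id^*(G) = G and H^*(F^*(G)) = (F o H)^*(G) come from
   <pr_0, ..., pr_(n-1)> = id and the naturality of tuples, <G_i o <F>>_i = <G> o <F>; the
   same two facts make substitution on vertical morphisms, which is whiskering eta o <F>,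
   strictly functorial. The generic object is 1: a morphism n -> 1 of Ctx(R) is a single
   object of M^n -> M, and substitution acts on both by precomposition. *)

Set Implicit Arguments.
Unset Strict Implicit.
Unset Printing Implicit Defensive.

Section Products.
Variable C : FPCat.

Lemma cmpA_eq (a b c d : ob C) (h : hom c d) (g : hom b c) (x : hom b d) (f : hom a b) :
  h \oo g = x -> h \oo (g \oo f) = x \oo f.
Proof. by rewrite cmpA => ->. Qed.

Lemma pair_cmp (a b c d : ob C) (f : hom b c) (g : hom b d) (h : hom a b) :
  pair f g \oo h = pair (f \oo h) (g \oo h).
Proof. by rewrite {1}(pair_uniq (pair f g \oo h)) !cmpA pair_p1 pair_p2. Qed.

Lemma pair_p1p2 (a b : ob C) : pair (@p1 C a b) p2 = cid _.
Proof. by rewrite (pair_uniq (cid _)) !cmp1r. Qed.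

Lemma pair_ext (c a b : ob C) (h h' : hom c (prd a b)) :
  p1 \oo h = p1 \oo h' -> p2 \oo h = p2 \oo h' -> h = h'.
Proof. by move=> E1 E2; rewrite (pair_uniq h) (pair_uniq h') E1 E2. Qed.

Lemma pair_p1r (x y a b : ob C) (f : hom y a) (g : hom y b) (h : hom x y) :
  p1 \oo (pair f g \oo h) = f \oo h.
Proof. exact/cmpA_eq/pair_p1. Qed.

Lemma pair_p2r (x y a b : ob C) (f : hom y a) (g : hom y b) (h : hom x y) :
  p2 \oo (pair f g \oo h) = g \oo h.
Proof. exact/cmpA_eq/pair_p2. Qed.

Lemma pmap_pair (x a b a' b' : ob C) (f : hom a a') (g : hom b b') (h : hom x a) (k : hom x b) :
  Defs.pmap f g \oo pair h k = pair (f \oo h) (g \oo k).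
Proof. by rewrite /Defs.pmap pair_cmp -!cmpA pair_p1 pair_p2. Qed.

Lemma pmap_pmap (a b a' b' a'' b'' : ob C)
    (f : hom a' a'') (g : hom b' b'') (h : hom a a') (k : hom b b') :
  Defs.pmap f g \oo Defs.pmap h k = Defs.pmap (f \oo h) (g \oo k).
Proof. by rewrite {1}/Defs.pmap pmap_pair !cmpA. Qed.

Lemma pmap_id (a b : ob C) : Defs.pmap (cid a) (cid b) = cid _.
Proof. by rewrite /Defs.pmap !cmp1l pair_p1p2. Qed.

Lemma p1_pmap (a b a' b' : ob C) (f : hom a a') (g : hom b b') :
  p1 \oo Defs.pmap f g = f \oo p1.
Proof. exact: pair_p1. Qed.

Lemma p2_pmap (a b a' b' : ob C) (f : hom a a') (g : hom b b') :
  p2 \oo Defs.pmap f g = g \oo p2.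
Proof. exact: pair_p2. Qed.

Lemma p1_pmapr (x a b a' b' : ob C) (f : hom a a') (g : hom b b') (h : hom x (prd a b)) :
  p1 \oo (Defs.pmap f g \oo h) = f \oo (p1 \oo h).
Proof. by rewrite (cmpA_eq _ (p1_pmap f g)) -cmpA. Qed.

Lemma p2_pmapr (x a b a' b' : ob C) (f : hom a a') (g : hom b b') (h : hom x (prd a b)) :
  p2 \oo (Defs.pmap f g \oo h) = g \oo (p2 \oo h).
Proof. by rewrite (cmpA_eq _ (p2_pmap f g)) -cmpA. Qed.

End Products.

(* Right-associate all composites, then rewrite with the equations in context,
   also when their left-hand side only occurs up to associativity. *)
Ltac chase_step := match goal with
  | H : ?l = _ |- context[?l] => rewrite H
  | H : ?a \oo ?b = _ |- context[?a \oo (?b \oo _)] => rewrite (cmpA_eq _ H)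
  end.
Ltac chase := rewrite -?cmpA; repeat (chase_step; rewrite -?cmpA).
Ltac chase_composable := rewrite /composable; chase.

Ltac prod_simpl := do 4 rewrite -?cmpA ?pair_p1 ?pair_p2 ?pair_p1r ?pair_p2r
                                ?p1_pmap ?p2_pmap ?p1_pmapr ?p2_pmapr.

Section InternalCategory.
Variables (C : FPCat) (A : ICat C).
Hypothesis HA : is_icat A.

Lemma src_iid : isrc A \oo iid A = cid _. Proof. by case: HA => [[]]. Qed.
Lemma tgt_iid : itgt A \oo iid A = cid _. Proof. by case: HA => [[]]. Qed.

Lemma src_icm x (f g : hom x (c1 A)) : composable f g -> isrc A \oo icm f g = isrc A \oo g.
Proof. by case: HA => _ H _ _ _ /H []. Qed.

Lemma tgt_icm x (f g : hom x (c1 A)) : composable f g -> itgt A \oo icm f g = itgt A \oo f.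
Proof. by case: HA => _ H _ _ _ /H []. Qed.

Lemma icm_nat x y (h : hom y x) (f g : hom x (c1 A)) : composable f g ->
  icm (f \oo h) (g \oo h) = icm f g \oo h.
Proof. by case: HA => _ _ H _ _ /H. Qed.

Lemma icmA x (f g k : hom x (c1 A)) : composable f g -> composable g k ->
  icm (icm f g) k = icm f (icm g k).
Proof. by case: HA => _ _ _ _ H; apply: H. Qed.

Lemma icm_idl x (f : hom x (c1 A)) y : itgt A \oo f = y -> icm (iid A \oo y) f = f.
Proof. by move=> <-; case: HA => _ _ _ H _; rewrite cmpA; case: (H _ f). Qed.

Lemma icm_idr x (f : hom x (c1 A)) y : isrc A \oo f = y -> icm f (iid A \oo y) = f.
Proof. by move=> <-; case: HA => _ _ _ H _; rewrite cmpA; case: (H _ f). Qed.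

Lemma src_iidr x (y : hom x (c0 A)) : isrc A \oo (iid A \oo y) = y.
Proof. by rewrite cmpA src_iid cmp1l. Qed.

Lemma tgt_iidr x (y : hom x (c0 A)) : itgt A \oo (iid A \oo y) = y.
Proof. by rewrite cmpA tgt_iid cmp1l. Qed.

End InternalCategory.

Section NaturalTransformations.
Variable C : FPCat.

Lemma fcompA (A B D E : ICat C) (H : IFun D E) (G : IFun B D) (F : IFun A B) :
  fcomp H (fcomp G F) = fcomp (fcomp H G) F.
Proof. by rewrite /fcomp !cmpA. Qed.

Lemma ifun_composable (A B : ICat C) (F : IFun A B) x (f g : hom x (c1 A)) :
  is_ifun F -> composable f g -> composable (f1 F \oo f) (f1 F \oo g).
Proof. by case=> Fs Ft _ _; rewrite /composable !cmpA Fs Ft -!cmpA => ->. Qed.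

Lemma ifun_comp (A B D : ICat C) (G : IFun B D) (F : IFun A B) :
  is_ifun G -> is_ifun F -> is_ifun (fcomp G F).
Proof.
move=> HG HF; move: (HG) (HF) => [Gs Gt Gi Gc] [Fs Ft Fi Fc]; split => /=; try by chase.
by move=> x f g fg; rewrite -cmpA Fc // Gc ?cmpA //; apply: ifun_composable.
Qed.

Section VerticalComposition.
Variables (A B : ICat C).
Hypothesis HB : is_icat B.

Lemma nt_id (F : IFun A B) : is_ifun F -> is_nt F F (ntid F).
Proof.
case=> Fs Ft _ _; split; rewrite /ntid ?src_iidr ?tgt_iidr //.
by rewrite -!cmpA icm_idl ?icm_idr.
Qed.

Lemma ntv_idl (F G : IFun A B) a : is_nt F G a -> ntv (ntid G) a = a.
Proof. by case=> _ at_ _; rewrite /ntv /ntid icm_idl. Qed.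

Lemma ntv_idr (F G : IFun A B) a : is_nt F G a -> ntv a (ntid F) = a.
Proof. by case=> as_ _ _; rewrite /ntv /ntid icm_idr. Qed.

Lemma ntvA (F G H K : IFun A B) a b c :
  is_nt F G a -> is_nt G H b -> is_nt H K c -> ntv (ntv c b) a = ntv c (ntv b a).
Proof.
move=> [_ at_ _] [bs bt _] [cs _ _].
have cba : composable b a by chase_composable.
by rewrite /ntv icmA //; chase_composable.
Qed.

Lemma nt_vcomp (F G H : IFun A B) a b :
  is_ifun F -> is_ifun G -> is_ifun H -> is_nt F G a -> is_nt G H b -> is_nt F H (ntv b a).
Proof.
case=> Fs Ft _ _ [Gs Gt _ _] [Hs _ _ _] [as_ at_ an] [bs bt bn].
have cba : composable b a by chase_composable.
rewrite /ntv; split; rewrite ?src_icm ?tgt_icm //.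
rewrite -!icm_nat // icmA //; try by chase_composable.
rewrite an -icmA //; try by chase_composable.
by rewrite bn icmA //; chase_composable.
Qed.

Lemma niso_id (F : IFun A B) : is_ifun F -> is_niso F F (ntid F).
Proof.
move=> HF; have nF := nt_id HF.
by split=> //; exists (ntid F); split=> //; apply: ntv_idl nF.
Qed.

Lemma niso_vcomp (F G H : IFun A B) a b :
  is_ifun F -> is_ifun G -> is_ifun H -> is_niso F G a -> is_niso G H b -> is_niso F H (ntv b a).
Proof.
move=> HF HG HH [na [a' [na' a'a aa']]] [nb [b' [nb' b'b bb']]].
split; first exact: nt_vcomp na nb.
exists (ntv a' b'); split; first exact: nt_vcomp nb' na'.
- rewrite (ntvA (nt_vcomp HF HG HH na nb) nb' na') -(ntvA na nb nb') b'b.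
  by rewrite (ntv_idl na) a'a.
- rewrite (ntvA (nt_vcomp HH HG HF nb' na') na nb) -(ntvA nb' na' na) aa'.
  by rewrite (ntv_idl nb') bb'.
Qed.

End VerticalComposition.
End NaturalTransformations.

Section Whiskering.
Variable C : FPCat.

Lemma nt_whiskl (A B D : ICat C) (H : IFun B D) (F G : IFun A B) eta :
  is_ifun H -> is_ifun F -> is_ifun G -> is_nt F G eta ->
  is_nt (fcomp H F) (fcomp H G) (f1 H \oo eta).
Proof.
move=> [Hs Ht _ Hc] [_ Ft _ _] [Gs _ _ _] [es et en].
split => /=; try by chase.
by rewrite -!cmpA -!Hc ?en //; chase_composable.
Qed.

Lemma nt_whiskr (A' A B : ICat C) (HB : is_icat B) (K : IFun A' A) (F G : IFun A B) eta :
  is_ifun K -> is_ifun F -> is_ifun G -> is_nt F G eta ->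
  is_nt (fcomp F K) (fcomp G K) (eta \oo f0 K).
Proof.
move=> [Ks Kt _ _] [_ Ft _ _] [Gs _ _ _] [es et en].
split => /=; try by chase.
by rewrite -!cmpA -Kt -Ks !cmpA !icm_nat ?en //; chase_composable.
Qed.

Lemma niso_whiskl (A B D : ICat C) (H : IFun B D) (F G : IFun A B) eta :
  is_ifun H -> is_ifun F -> is_ifun G -> is_niso F G eta ->
  is_niso (fcomp H F) (fcomp H G) (f1 H \oo eta).
Proof.
move=> HH HF HG [ne [e' [ne' e'e ee']]].
split; first exact: nt_whiskl.
exists (f1 H \oo e'); split; first exact: nt_whiskl.
all: move: HH ne ne' e'e ee' => [_ _ Hi Hc] [es et _] [es' et' _].
all: rewrite /ntv /ntid -Hc => [e'e ee'|]; last by chase_composable.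
all: by rewrite ?e'e ?ee' /= ?(cmpA_eq _ Hi) ?cmpA.
Qed.

Lemma niso_whiskr (A' A B : ICat C) (HB : is_icat B) (K : IFun A' A) (F G : IFun A B) eta :
  is_ifun K -> is_ifun F -> is_ifun G -> is_niso F G eta ->
  is_niso (fcomp F K) (fcomp G K) (eta \oo f0 K).
Proof.
move=> HK HF HG [ne [e' [ne' e'e ee']]].
split; first exact: nt_whiskr.
exists (e' \oo f0 K); split; first exact: nt_whiskr.
all: move: ne ne' e'e ee' => [es et _] [es' et' _].
all: rewrite /ntv /ntid (icm_nat HB) => [e'e ee'|]; last by chase_composable.
all: by rewrite ?e'e ?ee' /= -?cmpA.
Qed.

End Whiskering.

Section ProductCategories.
Variable C : FPCat.

Section BinaryProduct.
Variables A B : ICat C.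

Lemma composable_p1 x (f g : hom x (c1 (iprod A B))) :
  composable f g -> composable (p1 \oo f) (p1 \oo g).
Proof. by rewrite /composable /= => /(congr1 (cmp p1)); prod_simpl. Qed.

Lemma composable_p2 x (f g : hom x (c1 (iprod A B))) :
  composable f g -> composable (p2 \oo f) (p2 \oo g).
Proof. by rewrite /composable /= => /(congr1 (cmp p2)); prod_simpl. Qed.

Hypotheses (HA : is_icat A) (HB : is_icat B).

Lemma icat_prod : is_icat (iprod A B).
Proof.
split => /=.
- by rewrite !pmap_pmap (src_iid HA) (src_iid HB) (tgt_iid HA) (tgt_iid HB) pmap_id.
- move=> x f g fg; have e1 := composable_p1 fg; have e2 := composable_p2 fg.
  by split; apply: pair_ext; prod_simpl; rewrite ?src_icm ?tgt_icm.
- move=> x y h f g fg; have e1 := composable_p1 fg; have e2 := composable_p2 fg.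
  by rewrite pair_cmp -!icm_nat // !cmpA.
- by move=> x f; split; apply: pair_ext; prod_simpl; rewrite ?icm_idl ?icm_idr.
- move=> x f g k fg gk; have e1 := composable_p1 fg; have e2 := composable_p2 fg.
  have e3 := composable_p1 gk; have e4 := composable_p2 gk.
  by rewrite !pair_p1 !pair_p2 !icmA.
Qed.

End BinaryProduct.

Lemma icat_one : is_icat (ione C).
Proof. by split => *; try split; apply: bang_uniq. Qed.

Lemma ifun_id (A : ICat C) : is_ifun (fid A).
Proof. by split => /= [||| *]; rewrite ?cmp1l ?cmp1r. Qed.

Lemma ifun_bang (A : ICat C) : is_ifun (fbang A).
Proof. by split => *; apply: bang_uniq. Qed.

Lemma ifun_pmap (A B A' B' : ICat C) (F : IFun A A') (G : IFun B B') :
  is_ifun F -> is_ifun G -> is_ifun (fpmap F G).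
Proof.
move=> [Fs Ft Fi Fc] [Gs Gt Gi Gc]; split => /=; rewrite ?pmap_pmap ?Fs ?Ft ?Fi ?Gs ?Gt ?Gi //.
move=> x f g fg; rewrite pmap_pair Fc ?Gc; first by prod_simpl.
all: by [apply: composable_p1 | apply: composable_p2].
Qed.

Lemma ifun_pair (A B D : ICat C) (F : IFun A B) (G : IFun A D) :
  is_ifun F -> is_ifun G -> is_ifun (fpair F G).
Proof.
move=> [Fs Ft Fi Fc] [Gs Gt Gi Gc].
split => /=; rewrite ?pmap_pair ?pair_cmp ?Fs ?Ft ?Fi ?Gs ?Gt ?Gi //.
by move=> x f g fg; rewrite pair_cmp Fc ?Gc //; prod_simpl.
Qed.

Lemma fcomp_pmap_pair (A B D B' D' : ICat C)
    (H : IFun B B') (K : IFun D D') (F : IFun A B) (G : IFun A D) :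
  fcomp (fpmap H K) (fpair F G) = fpair (fcomp H F) (fcomp K G).
Proof. by rewrite /fcomp /= !pmap_pair. Qed.

Lemma fcomp_pair (A' A B D : ICat C) (F : IFun A B) (G : IFun A D) (K : IFun A' A) :
  fcomp (fpair F G) K = fpair (fcomp F K) (fcomp G K).
Proof. by rewrite /fcomp /= !pair_cmp. Qed.

Lemma nt_pair (A B D : ICat C) (F1 G1 : IFun A B) (F2 G2 : IFun A D) a b :
  is_nt F1 G1 a -> is_nt F2 G2 b -> is_nt (fpair F1 F2) (fpair G1 G2) (pair a b).
Proof.
move=> [as_ at_ an] [bs bt bn]; split => /=; rewrite ?pmap_pair ?as_ ?bs ?at_ ?bt //.
by rewrite !pair_p1r !pair_p2r !pair_p1 !pair_p2 an bn.
Qed.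

Lemma niso_pair (A B D : ICat C) (F1 G1 : IFun A B) (F2 G2 : IFun A D) a b :
  is_niso F1 G1 a -> is_niso F2 G2 b -> is_niso (fpair F1 F2) (fpair G1 G2) (pair a b).
Proof.
move=> [na [a' [na' a'a aa']]] [nb [b' [nb' b'b bb']]].
split; first exact: nt_pair.
exists (pair a' b'); split; first exact: nt_pair.
- by move: a'a b'b; rewrite /ntv /ntid /= !pair_p1 !pair_p2 pmap_pair => -> ->.
- by move: aa' bb'; rewrite /ntv /ntid /= !pair_p1 !pair_p2 pmap_pair => -> ->.
Qed.

End ProductCategories.

Section ReflexiveGraphs.
Variable C : FPCat.

Lemma face_dg0 (X : RG C) b : is_rg_struct X -> f0 (face X b) \oo f0 (dg X) = cid _.
Proof. by case=> _ _ _ _ /(_ b) /(congr1 (@f0 _ _ _)). Qed.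

Lemma face_dg1 (X : RG C) b : is_rg_struct X -> f1 (face X b) \oo f1 (dg X) = cid _.
Proof. by case=> _ _ _ _ /(_ b) /(congr1 (@f1 _ _ _)). Qed.

Lemma rgs_prod (X Y : RG C) : is_rg_struct X -> is_rg_struct Y -> is_rg_struct (rgprod X Y).
Proof.
move=> HX HY; move: (HX) (HY) => [X0 X1 Xf Xd _] [Y0 Y1 Yf Yd _].
split => /= [||b||b]; try exact: icat_prod; try exact: ifun_pmap.
by rewrite /fcomp /fpmap /= !pmap_pmap !face_dg0 ?face_dg1 // !pmap_id.
Qed.

Lemma rgs_one : is_rg_struct (rgone C).
Proof.
by split => /= [||b||b]; try exact: icat_one; try exact: ifun_id; rewrite /fcomp /fid /= cmp1l.
Qed.

Lemma rgfun_pair (X Y Z : RG C) (F : RGFe X Y) (G : RGFe X Z) :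
  is_rgfun F -> is_rgfun G -> is_rgfun (epair F G).
Proof.
move=> [F0 F1 Ff Fn Fe] [G0 G1 Gf Gn Ge]; split => /=.
- exact: ifun_pair.
- exact: ifun_pair.
- by move=> b; rewrite fcomp_pmap_pair fcomp_pair Ff Gf.
- by rewrite fcomp_pmap_pair fcomp_pair; apply: niso_pair.
by move=> b; rewrite !pmap_pair Fe Ge.
Qed.

Lemma rgfun_bang (X : RG C) : is_rgfun (ebang X).
Proof.
split => /=; try exact: ifun_bang.
- by move=> b; rewrite /fcomp; congr Build_IFun; apply: bang_uniq.
- split; first by split; apply: bang_uniq.
  by exists (bang _); split; try split; apply: bang_uniq.
by move=> b; apply: bang_uniq.
Qed.

Lemma face_ee_comp (X Y Z : RG C) (G : RGFe Y Z) (F : RGFe X Y) b :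
  is_rg_struct Z -> is_rgfun G -> is_rgfun F ->
  f1 (face Z b) \oo ee (comp_e G F) = iid (R0 Z) \oo f0 (e0 (comp_e G F)).
Proof.
move=> [Z0 _ /(_ b) [_ _ _ Zc] _ _].
move=> [[_ _ G0i _] [G1s _ _ _] /(_ b) /(congr1 (@f1 _ _ _)) /= Gf1 [[Gns Gnt _] _] /(_ b) Ge].
move=> [_ _ _ [[Fns Fnt _] _] /(_ b) Fe] /=.
move=> /= in Gns Gnt Fns Fnt.
rewrite Zc; last by chase_composable.
have -> : f1 (face Z b) \oo (f1 (e1 G) \oo ee F) = iid (R0 Z) \oo (f0 (e0 G) \oo f0 (e0 F)).
  by chase.
have -> : f1 (face Z b) \oo (ee G \oo f0 (e0 F)) = iid (R0 Z) \oo (f0 (e0 G) \oo f0 (e0 F)).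
  by chase.
by rewrite icm_idl // tgt_iidr.
Qed.

Lemma rgfun_comp (X Y Z : RG C) (G : RGFe Y Z) (F : RGFe X Y) :
  is_rg_struct X -> is_rg_struct Y -> is_rg_struct Z ->
  is_rgfun G -> is_rgfun F -> is_rgfun (comp_e G F).
Proof.
move=> [_ _ _ Xd _] [_ _ _ Yd _] HZ; have [_ Z1 _ Zd _] := HZ.
move=> HG HF; have [G0 G1 Gf Gn _] := HG; have [F0 F1 Ff Fn _] := HF; split => /=.
- exact: ifun_comp.
- exact: ifun_comp.
- by move=> b; rewrite fcompA Gf -fcompA Ff fcompA.
- have n1 := niso_whiskr Z1 F0 (ifun_comp Zd G0) (ifun_comp G1 Yd) Gn.
  have n2 := niso_whiskl G1 (ifun_comp Yd F0) (ifun_comp F1 Xd) Fn.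
  rewrite -!fcompA in n1 n2 *.
  by apply: (niso_vcomp Z1 _ _ _ n1 n2); repeat apply: ifun_comp.
by move=> b; apply: face_ee_comp.
Qed.

Lemma rgfun_strict (X Y : RG C) (E0 : IFun (R0 X) (R0 Y)) (E1 : IFun (R1 X) (R1 Y)) :
  is_rg_struct X -> is_rg_struct Y -> is_ifun E0 -> is_ifun E1 ->
  (forall b, fcomp (face Y b) E1 = fcomp E0 (face X b)) -> fcomp (dg Y) E0 = fcomp E1 (dg X) ->
  is_rgfun (strict_e E0 E1).
Proof.
move=> HX [_ Y1 Yf _ _] H0 H1 Hf Hd; split => //=.
- by rewrite Hd; apply: niso_id; last by apply: ifun_comp => //; case: HX.
move=> b; move: (Yf b) (Hf b) => [_ _ Yfi _] /(congr1 (@f0 _ _ _)) /= Hf0.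
have Xfd0 := face_dg0 b HX.
by chase; rewrite cmp1r.
Qed.

Lemma comp_epair (X Y Z W : RG C) (A : RGFe Y Z) (B : RGFe Y W) (K : RGFe X Y) :
  comp_e (epair A B) K = epair (comp_e A K) (comp_e B K).
Proof. by rewrite /comp_e /epair /= !fcomp_pair !pair_cmp !pair_p1 !pair_p2. Qed.

Lemma comp_ebang (X Y : RG C) (K : RGFe X Y) : comp_e (ebang Y) K = ebang X.
Proof. by congr Build_RGFe; try congr Build_IFun; apply: bang_uniq. Qed.

Definition rgid (X : RG C) : RGFe X X := Build_RGFe (fid _) (fid _) (iid (R1 X) \oo f0 (dg X)).

Lemma comp_e_id (X Y : RG C) (G : RGFe X Y) :
  is_rg_struct Y -> is_rgfun G -> comp_e G (rgid X) = G.
Proof.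
case: G => [[a0 a1] [b0 b1] e] [_ Y1 _ _ _] [_ [_ _ Gi _] _ [[_ Gt _] _] _] /=.
rewrite /comp_e /fcomp /= !cmp1r; congr Build_RGFe.
by move=> /= in Gi Gt; rewrite cmpA Gi -cmpA icm_idl.
Qed.

Lemma comp_eA (W X Y Z : RG C) (A : RGFe Y Z) (B : RGFe X Y) (K : RGFe W X) :
  is_rg_struct Z -> is_rgfun A -> is_rgfun B -> is_rgfun K ->
  comp_e (comp_e A B) K = comp_e A (comp_e B K).
Proof.
move=> [_ Z1 _ _ _] [_ [A1s A1t _ A1c] _ [[Ans Ant _] _] _].
move=> [_ [B1s _ _ _] _ [[Bns Bnt _] _] _] [_ _ _ [[Kns _ _] _] _].
rewrite /comp_e /= -!fcompA; congr Build_RGFe.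
move=> /= in Ans Ant Bns Bnt Kns.
rewrite A1c; last by chase_composable.
rewrite -(icm_nat Z1); last by chase_composable.
by rewrite icmA ?cmpA //; chase_composable.
Qed.

(* [valid_hom F G eta] unfolds to
   [is_rgnt (comp_e (Ie R) F) (comp_e (Ie R) G) (h0 eta) (h1 eta)]. *)
Definition is_rgnt (X Y : RG C) (F G : RGFe X Y)
    (h0 : hom (c0 (R0 X)) (c1 (R0 Y))) (h1 : hom (c0 (R1 X)) (c1 (R1 Y))) : Prop :=
  [/\ is_nt (e0 F) (e0 G) h0, is_nt (e1 F) (e1 G) h1,
      (forall b, f1 (face Y b) \oo h1 = h0 \oo f0 (face X b))
    & icm (h1 \oo f0 (dg X)) (ee F) = icm (ee G) (f1 (dg Y) \oo h0)].

Lemma rgnt_id (X Y : RG C) (F : RGFe X Y) :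
  is_rg_struct Y -> is_rgfun F -> is_rgnt F F (ntid (e0 F)) (ntid (e1 F)).
Proof.
move=> [Y0 Y1 Yf [_ _ Ydi _] _] [F0 F1 Ff [[Fns Fnt _] _] _]; split.
- exact: nt_id.
- exact: nt_id.
- move=> b; have [_ _ Yfi _] := Yf b.
  by have /= Ff0 := congr1 (@f0 _ _ _) (Ff b); rewrite /ntid; chase.
move=> /= in Fns Fnt; rewrite /ntid -[iid _ \oo f0 (e1 F) \oo _]cmpA.
by rewrite (icm_idl Y1) // (cmpA_eq _ Ydi) -cmpA (icm_idr Y1).
Qed.

End ReflexiveGraphs.

Section Contexts.
Variables (C : FPCat) (R : RGIso C).
Hypothesis HR : is_rgiso R.
Local Notation X := (RX R).
Local Notation M := (RM R).

Lemma rgs_X : is_rg_struct X. Proof. by case: HR => [[[]]]. Qed.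
Lemma rgs_M : is_rg_struct M. Proof. by case: HR => [[_ []]]. Qed.

Lemma rgs_Mpow n : is_rg_struct (Mpow R n).
Proof. by elim: n => [|n IH] /=; [exact: rgs_one | exact: rgs_prod rgs_M IH]. Qed.

Lemma rgfun_Ie : is_rgfun (Ie R).
Proof.
case: HR => _ [H0 H1] _ [Hf Hd] _.
by apply: rgfun_strict rgs_M rgs_X H0 H1 _ _ => [b|]; rewrite ?Hf ?Hd.
Qed.

Lemma tup_ext Y m (f g : 'I_m -> RGFe Y M) : f =1 g -> tup f = tup g.
Proof. by elim: m f g => [|m IH] f g E //=; rewrite E (IH _ (fun j => g (lift ord0 j))). Qed.

Lemma comp_tup Y Y' m (f : 'I_m -> RGFe Y M) (K : RGFe Y' Y) :
  comp_e (tup f) K = tup (fun i => comp_e (f i) K).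
Proof.
elim: m f => [|m IH] f /=; first exact: comp_ebang.
by rewrite comp_epair IH.
Qed.

Lemma rgfun_tup Y m (f : 'I_m -> RGFe Y M) :
  (forall i, is_rgfun (f i)) -> is_rgfun (tup f).
Proof.
elim: m f => [|m IH] f Hf /=; first exact: rgfun_bang.
by apply: rgfun_pair; [apply: Hf | apply: IH => j; apply: Hf].
Qed.

Lemma tup_prj n : tup (@prj _ R n) = rgid (Mpow R n).
Proof.
elim: n => [|n IH] /=.
  by congr Build_RGFe; try congr Build_IFun; apply: bang_uniq.
rewrite unlift_none (tup_ext (g := fun j => comp_e (prj R j) (eproj2 M (Mpow R n)))); last first.
  by move=> j; rewrite liftK.
have [_ N1 _ _ _] := rgs_Mpow n.
rewrite -comp_tup IH /epair /rgid /fpair /fcomp /=; congr Build_RGFe.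
- by rewrite /fid !cmp1l !pair_p1p2.
- by rewrite /fid !cmp1l !pair_p1p2.
rewrite pmap_pmap cmp1l p1_pmap p2_pmap /Defs.pmap; congr pair; rewrite ?cmpA //.
by rewrite -!cmpA icm_idl // tgt_iidr.
Qed.

Lemma pull_valid n m (f : ctx_hom R n m) G :
  ctx_valid f -> valid_obj G -> valid_obj (pull f G).
Proof.
by move=> Hf HG; apply: rgfun_comp (rgs_Mpow n) (rgs_Mpow m) rgs_M HG (rgfun_tup Hf).
Qed.

Lemma ctx_comp_valid n m k (f : ctx_hom R n m) (g : ctx_hom R m k) :
  ctx_valid f -> ctx_valid g -> ctx_valid (ctx_comp g f).
Proof. by move=> Hf Hg i; apply: pull_valid. Qed.

Lemma pull_id m (G : RGO R m) : valid_obj G -> pull (@ctx_id _ R m) G = G.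
Proof. by move=> HG; rewrite /pull /ctx_id tup_prj comp_e_id //; exact: rgs_M. Qed.

Lemma pull_comp n m k (f : ctx_hom R n m) (g : ctx_hom R m k) G :
  ctx_valid f -> ctx_valid g -> valid_obj G -> pull f (pull g G) = pull (ctx_comp g f) G.
Proof.
move=> Hf Hg HG.
by rewrite /pull comp_eA ?comp_tup //; [exact: rgs_M | exact: rgfun_tup | exact: rgfun_tup].
Qed.

Lemma hpull_id n (eta : RGH R n) : hpull (@ctx_id _ R n) eta = eta.
Proof. by rewrite /hpull /ctx_id tup_prj /= !cmp1r; case: eta. Qed.

Lemma hpull_comp n m k (f : ctx_hom R n m) (g : ctx_hom R m k) (eta : RGH R k) :
  hpull f (hpull g eta) = hpull (ctx_comp g f) eta.
Proof. by rewrite /hpull /ctx_comp /pull -comp_tup /= !cmpA. Qed.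

Lemma hpull_hid n m (h : ctx_hom R n m) (F : RGO R m) : hpull h (hid F) = hid (pull h F).
Proof. by rewrite /hpull /hid /ntid /=; congr Build_RGH; rewrite -!cmpA. Qed.

Lemma icat_X0 : is_icat (R0 X). Proof. by case: rgs_X. Qed.
Lemma icat_X1 : is_icat (R1 X). Proof. by case: rgs_X. Qed.

Lemma hid_valid n (F : RGO R n) : valid_obj F -> valid_hom F F (hid F).
Proof.
move=> HF; apply: rgnt_id rgs_X _.
exact: rgfun_comp (rgs_Mpow n) rgs_M rgs_X rgfun_Ie HF.
Qed.

Lemma hcomp_hidl n (F G : RGO R n) eta : valid_hom F G eta -> hcomp (hid G) eta = eta.
Proof.
case=> n0 n1 _ _; rewrite /hcomp /hid /= (ntv_idl icat_X0 n0) (ntv_idl icat_X1 n1).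
by case: eta n0 n1.
Qed.

Lemma hcomp_hidr n (F G : RGO R n) eta : valid_hom F G eta -> hcomp eta (hid F) = eta.
Proof.
case=> n0 n1 _ _; rewrite /hcomp /hid /= (ntv_idr icat_X0 n0) (ntv_idr icat_X1 n1).
by case: eta n0 n1.
Qed.

Lemma hcomp_hpull_hid n m (f : ctx_hom R n m) (G G' : RGO R m) (eta : RGH R m) :
  valid_hom G G' eta -> hcomp (hpull f eta) (hid (pull f G)) = hpull f eta.
Proof.
case=> [[s0 _ _] [s1 _ _] _ _]; move=> /= in s0 s1.
rewrite /hcomp /hpull /hid /ntid /ntv /=; congr Build_RGH.
- by rewrite (icm_idr icat_X0) //; chase.
- by rewrite (icm_idr icat_X1) //; chase.
Qed.

End Contexts.

Section Cleavage.
Variables (C : FPCat) (R : RGIso C).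
Hypothesis HR : is_rgiso R.

Definition clift n m (f : ctx_hom R n m) (G : RGO R m) : IHom R n m := (f, hid (pull f G)).

Lemma clift_valid n m (f : ctx_hom R n m) G :
  ctx_valid f -> valid_obj G -> valid_ihom (pull f G) G (clift f G).
Proof. by move=> Hf HG; split=> //; apply/hid_valid/pull_valid. Qed.

Lemma icomp_clift k n m (f : ctx_hom R n m) (h : ctx_hom R k n) G K eta :
  ctx_valid f -> ctx_valid h -> valid_obj G -> valid_hom K (pull (ctx_comp f h) G) eta ->
  icomp (clift f G) (h, eta) = (ctx_comp f h, eta).
Proof.
by move=> Hf Hh HG Heta; rewrite /icomp /= hpull_hid pull_comp // (hcomp_hidl HR Heta).
Qed.

Lemma clift_cartesian n m (f : ctx_hom R n m) G :
  ctx_valid f -> valid_obj G -> cartesian (pull f G) G (clift f G).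
Proof.
move=> Hf HG k K [g eta] h HK [_ /= Heta] Hh /= Efh; subst g.
exists (h, eta); split.
  split=> //; last exact: icomp_clift Hf Hh HG Heta.
  by split=> //=; rewrite pull_comp.
move=> [h' eta'] [[_ /= Heta'] /= Eh]; subst h'; rewrite pull_comp // in Heta'.
by rewrite (icomp_clift Hf Hh HG Heta') => -[->].
Qed.

Lemma clift_verticalE n m (f : ctx_hom R n m) (G G' : RGO R m) phi alpha :
  ctx_valid f -> valid_obj G -> valid_obj G' -> vertical G G' phi ->
  vertical (pull f G) (pull f G') alpha ->
  icomp (clift f G') alpha = icomp phi (clift f G) ->
  alpha = (@ctx_id _ R n, hpull f phi.2).
Proof.
move=> Hf HG HG' [[_ Vphi] _] [[_ Valpha] Ealpha] /(congr1 snd) /=.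
case: alpha Ealpha Valpha => _ alpha /= -> Valpha.
rewrite (pull_id HR (pull_valid HR Hf HG')) in Valpha.
by rewrite hpull_id // (hcomp_hpull_hid HR f Vphi) (hcomp_hidl HR Valpha) => ->.
Qed.

Lemma clift_id_vertical m (G G' : RGO R m) phi :
  valid_obj G -> valid_obj G' -> vertical G G' phi ->
  icomp (clift (@ctx_id _ R m) G') phi = icomp phi (clift (@ctx_id _ R m) G).
Proof.
move=> HG HG' [[_ Vphi] /= Eid]; case: phi Eid Vphi => _ phi /= -> Vphi.
rewrite (pull_id HR HG') in Vphi.
rewrite /icomp /clift /= !hpull_id // !pull_id //.
by rewrite (hcomp_hidl HR Vphi) (hcomp_hidr HR Vphi).
Qed.

Lemma split_generic_one_ord0 : split_generic_one (fun n m f G => @pull _ R n m f G).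
Proof.
exists (fun n f => f ord0); split=> [n f Hf | n f f' _ _ Ef | n G HG | //].
- exact: Hf.
- by apply: functional_extensionality => i; rewrite (ord1 i).
- by exists (fun _ => G).
Qed.

End Cleavage.

Theorem lemma37 (C : FPCat) (R : RGIso C) :
  is_rgiso R ->
  exists (pb : forall n m, ctx_hom R n m -> RGO R m -> RGO R n)
         (lift : forall n m, ctx_hom R n m -> RGO R m -> IHom R n m),
    split_fibration pb lift /\ split_generic_one pb.
Proof.
move=> HR; exists (fun n m f G => pull f G), (fun n m f G => clift f G).
split; last exact: split_generic_one_ord0.
split.
- move=> n m f G Hf HG.
  by split; [exact: pull_valid | exact: clift_valid | by [] | exact: clift_cartesian].
- exact: pull_id.
- exact: clift_id_vertical.
- exact: pull_comp.
move=> n m k f g G G' phi alpha beta chi Hf Hg HG HG' Vphi Valpha Ealpha Vbeta Ebeta Vchi Echi.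
have Hgf := ctx_comp_valid HR Hf Hg.
have HgG := pull_valid HR Hg HG; have HgG' := pull_valid HR Hg HG'.
rewrite (clift_verticalE HR Hf HgG HgG' Valpha Vbeta Ebeta).
rewrite (clift_verticalE HR Hgf HG HG' Vphi Vchi Echi).
by rewrite (clift_verticalE HR Hg HG HG' Vphi Valpha Ealpha) hpull_comp.
Qed.
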